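(* Suppose a social choice function $f$ is rationalizably implemented by a mechanism $\mathcal{M}$. Then for all $\theta,\theta'\in\Theta$: if $S_i^{\mathcal{M},\theta}\subseteq S_i^{\mathcal{M},\theta'}$ for every $i\in\mathcal{I}$, then $S_i^{\mathcal{M},\theta}=S_i^{\mathcal{M},\theta'}$ for every $i\in\mathcal{I}$.
   Context: Setting: $\mathcal{I}$ is a finite set of agents with $|\mathcal{I}|\ge3$; $\Theta$ is a finite set of states; $Z$ is a countable set of pure outcomes; $Y=\Delta(Z)$ is the set of lotteries on $Z$, each $z\in Z$ identified with the degenerate lottery. Each agent $i$ has at each state $\theta$ a utility $u_i(\cdot,\theta):Z\to\mathbb{R}$, extended to $Y$ by expected utility. An SCF is a map $f:\Theta\to Z$ (assumed with $|f(\Theta)|\ge2$). A mechanism is $\mathcal{M}=\langle M=\times_iM_i,\ g:M\to Y\rangle$ with each $M_i$ countable. For state $\theta$ and profile $S=(S_i)_i$, $S_i\subseteq M_i$, $b_i^{\mathcal{M},\theta}(S)$ is the set of $m_i\in M_i$ for which there is a probability distribution $\lambda_{-i}$ on $M_{-i}$ supported in $S_{-i}=\times_{j\ne i}S_j$ with $m_i\in\arg\max_{m_i'\in M_i}\sum_{m_{-i}}\lambda_{-i}(m_{-i})u_i(g(m_i',m_{-i}),\theta)$. $S^{\mathcal{M},\theta}=(S_i^{\mathcal{M},\theta})_i$ is the largest fixed point of the monotone operator $b^{\mathcal{M},\theta}=(b_i^{\mathcal{M},\theta})_i$ with respect to componentwise inclusion, identified with the product $\times_iS_i^{\mathcal{M},\theta}$.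 $f$ is rationalizably implemented by $\mathcal{M}$ if $g(S^{\mathcal{M},\theta})=\{f(\theta)\}$ for every $\theta\in\Theta$. *)

From HB Require Import structures.
From mathcomp Require Import all_boot all_order all_algebra.
From mathcomp Require Import all_classical all_reals all_analysis.
Unset Printing Implicit Defensive.
Import Order.TTheory GRing.Theory Num.Theory.
Local Open Scope classical_set_scope.
Local Open Scope ring_scope.

Definition is_prob {R : realType} {T : choiceType} (p : T -> R) : Prop :=
  (forall t, 0 <= p t) /\ (\esum_(t in [set: T]) (p t)%:E = 1)%E.

Record lottery (R : realType) (Z : choiceType) := Lottery {
  lot :> Z -> R ;
  lotP : is_prob lot }.
Arguments lot {R Z}.
Arguments lotP {R Z}.

Definition is_degenerate {R : realType} {Z : choiceType} (y : lottery R Z) (z : Z)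
  : Prop := forall t, lot y t = if t == z then 1 else 0.

Definition eexpect {R : realType} {T : choiceType} (p : T -> R) (h : T -> \bar R)
  : \bar R :=
  (\esum_(t in [set: T]) ((fun t => (p t)%:E * h t)^\+ t)
   - \esum_(t in [set: T]) ((fun t => (p t)%:E * h t)^\- t))%E.

Definition EU {R : realType} {Z : choiceType} (v : Z -> R) (y : lottery R Z) : \bar R :=
  eexpect (lot y) (fun z => (v z)%:E).

Definition profile {I : finType} (M : I -> countType) := {dffun forall i, M i}.

Definition upd {I : finType} {M : I -> countType} (m : profile M) (i : I) (x : M i)
  : profile M := [ffun j => @dfwith I (fun k => M k) (fun k => m k) i x j].

(* A belief lambda_{-i} on M_{-i} is represented as a
   probability distribution on full profiles whose j-th components (j <> i)
   lie in S_j on its support; the i-th component is ignored since it is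
   overwritten by the deviation m_i'. *)
Definition bestresp {R : realType} {I : finType} {Z : countType} {Theta : Type}
  {M : I -> countType} (g : profile M -> lottery R Z)
  (u : I -> Z -> Theta -> R) (theta : Theta)
  (S : forall i, set (M i)) (i : I) : set (M i) :=
  [set mi | exists lam : profile M -> R,
      [/\ is_prob lam,
          (forall m, lam m != 0 -> forall j, j != i -> S j (m j)) &
          forall mi' : M i,
            (eexpect lam (fun m => EU (fun z => u i z theta) (g (upd m i mi')))
             <= eexpect lam (fun m => EU (fun z => u i z theta) (g (upd m i mi))))%E]].

Definition is_rat_set {R : realType} {I : finType} {Z : countType} {Theta : Type}
  {M : I -> countType} (g : profile M -> lottery R Z)
  (u : I -> Z -> Theta -> R) (theta : Theta) (S : forall i, set (M i)) : Prop :=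
  (forall i, bestresp g u theta S i = S i) /\
  (forall T : forall i, set (M i),
      (forall i, bestresp g u theta T i = T i) -> forall i, T i `<=` S i).

Definition rat_implements {R : realType} {I : finType} {Z : countType} {Theta : Type}
  {M : I -> countType} (g : profile M -> lottery R Z)
  (u : I -> Z -> Theta -> R) (f : Theta -> Z) : Prop :=
  forall theta (S : forall i, set (M i)), is_rat_set g u theta S ->
    (exists m : profile M, forall i, S i (m i)) /\
    (forall m : profile M, (forall i, S i (m i)) -> is_degenerate (g m) (f theta)).

From HB Require Import structures.
From mathcomp Require Import all_boot all_order all_algebra.
From mathcomp Require Import all_classical all_reals all_analysis.
Import Order.TTheory GRing.Theory Num.Theory.
Local Open Scope classical_set_scope.
Local Open Scope ring_scope.

(* Since S^theta is nonempty and contained in S^theta', the mechanism yields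
   both f(theta) and f(theta') on a common profile, so f(theta) = f(theta').
   Now let m_i be in S_i^theta', and let m0_i in S_i^theta be a best reply to
   a belief lambda on S_-i^theta.  Against every profile in the support of
   lambda, m_i lands in S^theta' and m0_i in S^theta, so both yield the same
   degenerate lottery; hence m_i earns the same expected utility as m0_i and
   is a best reply to lambda as well, i.e. m_i is in b_i(S^theta) = S_i^theta. *)

Lemma upd_eq {I : finType} {M : I -> countType} (m : profile M) (i : I) (x : M i) :
  upd m i x i = x.
Proof. by rewrite /upd ffunE dfwithin. Qed.

Lemma upd_neq {I : finType} {M : I -> countType} (m : profile M) (i j : I) (x : M i) :
  j != i -> upd m i x j = m j.
Proof. by move=> ji; rewrite /upd ffunE dfwithout // eq_sym. Qed.

Lemma upd_in_product {I : finType} {M : I -> countType} {S : forall i, set (M i)}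
    {m : profile M} {i : I} {x : M i} :
  (forall j, j != i -> S j (m j)) -> S i x -> forall j, S j (upd m i x j).
Proof.
move=> Sm Sx j; have [/eqP -> | ji] := boolP (j == i); first by rewrite upd_eq.
by rewrite upd_neq //; apply: Sm.
Qed.

Lemma eq_eexpect {R : realType} {T : choiceType} (p : T -> R) (h1 h2 : T -> \bar R) :
  (forall t, p t != 0 -> h1 t = h2 t) -> eexpect p h1 = eexpect p h2.
Proof.
move=> h12; rewrite /eexpect.
suff -> : (fun t => (p t)%:E * h1 t)%E = (fun t => (p t)%:E * h2 t)%E by [].
apply/funext => t; have [/eqP -> | /h12 -> //] := boolP (p t == 0).
by rewrite !mul0e.
Qed.

Lemma eq_EU {R : realType} {Z : choiceType} (v : Z -> R) (y1 y2 : lottery R Z) :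
  lot y1 =1 lot y2 -> EU v y1 = EU v y2.
Proof. by move=> /funext; rewrite /EU => ->. Qed.

Lemma degenerate_lot_eq {R : realType} {Z : choiceType} {y1 y2 : lottery R Z} {z : Z} :
  is_degenerate y1 z -> is_degenerate y2 z -> lot y1 =1 lot y2.
Proof. by move=> d1 d2 t; rewrite d1 d2. Qed.

Lemma degenerate_inj {R : realType} {Z : choiceType} {y : lottery R Z} {z z' : Z} :
  is_degenerate y z -> is_degenerate y z' -> z = z'.
Proof.
move=> dz dz'; apply/eqP; apply: contraT => zz'.
by have := dz z; rewrite dz' eqxx (negbTE zz') => /esym/eqP; rewrite oner_eq0.
Qed.

Lemma bestresp_outcome_equiv {R : realType} {I : finType} {Z : countType}
    {Theta : Type} {M : I -> countType} {g : profile M -> lottery R Z}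
    {u : I -> Z -> Theta -> R} {theta : Theta} {S : forall i, set (M i)}
    {i : I} {mi mi' : M i} :
  bestresp g u theta S i mi ->
  (forall m : profile M, (forall j, j != i -> S j (m j)) ->
     lot (g (upd m i mi')) =1 lot (g (upd m i mi))) ->
  bestresp g u theta S i mi'.
Proof.
move=> [lam [lam_prob lam_supp lam_best]] same.
exists lam; split => // mi''.
set payoff := fun x m => EU (fun z => u i z theta) (g (@upd _ M m i x)).
have -> : eexpect lam (payoff mi') = eexpect lam (payoff mi).
  by apply: eq_eexpect => m /lam_supp Sm; apply/eq_EU/same.
exact: lam_best.
Qed.

Lemma rat_implements_outcome_eq {R : realType} {I : finType} {Z : countType}
    {Theta : Type} {M : I -> countType} {g : profile M -> lottery R Z}
    {u : I -> Z -> Theta -> R} {f : Theta -> Z} {theta theta' : Theta}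
    {S S' : forall i, set (M i)} :
  rat_implements g u f -> is_rat_set g u theta S -> is_rat_set g u theta' S' ->
  (forall i, S i `<=` S' i) -> f theta = f theta'.
Proof.
move=> impl rS rS' SS'.
have [[m Sm] degS] := impl theta S rS.
have [_ degS'] := impl theta' S' rS'.
exact: degenerate_inj (degS m Sm) (degS' m (fun i => SS' i _ (Sm i))).
Qed.

Theorem lemma1 (R : realType) (I : finType) (Theta : finType) (Z : countType)
  (u : I -> Z -> Theta -> R) (f : Theta -> Z)
  (hI : (3 <= #|I|)%N) (hf : exists th1 th2, f th1 != f th2)
  (M : I -> countType) (g : profile M -> lottery R Z)
  (himpl : rat_implements g u f) :
  forall (theta theta' : Theta) (S S' : forall i, set (M i)),
    is_rat_set g u theta S -> is_rat_set g u theta' S' ->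
    (forall i, S i `<=` S' i) -> forall i, S i = S' i.
Proof.
move=> theta theta' S S' rS rS' SS' i.
have eq_f := rat_implements_outcome_eq himpl rS rS' SS'.
have [[m0 Sm0] degS] := himpl theta S rS.
have [_ degS'] := himpl theta' S' rS'.
have [fixS _] := rS.
apply/seteqP; split => [|mi S'mi]; first exact: SS'.
have br_m0 : bestresp g u theta S i (m0 i) by rewrite fixS.
rewrite -fixS; apply: (bestresp_outcome_equiv br_m0).
move=> m Sm; apply: (degenerate_lot_eq (z := f theta)).
- rewrite eq_f; apply: degS'; apply: (upd_in_product _ S'mi) => j ji.
  exact/SS'/Sm.
- apply: degS; exact: (upd_in_product Sm (Sm0 i)).
Qed.
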